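(* If $(n,x,y)\in\mathbb Z^3$ satisfies $n\ge 3$, $\max\{|x|,|y|\}\ge 2$ and $\Phi_n(x,y)<7^{\varphi(n)/2}$, then $\max\{|x|,|y|\}=2$.
   Context: For $n\ge 1$, $\phi_n(X)\in\mathbb Z[X]$ denotes the $n$-th cyclotomic polynomial (degree $\varphi(n)$, $\varphi$ Euler's totient function), and the cyclotomic binary form is $\Phi_n(X,Y)=Y^{\varphi(n)}\phi_n(X/Y)$. *)

From HB Require Import structures.
From mathcomp Require Import all_boot all_order all_algebra all_field.
Set Implicit Arguments. Unset Strict Implicit. Unset Printing Implicit Defensive.
Import Order.TTheory GRing.Theory Num.Theory.
Local Open Scope ring_scope.

(* Cyclotomic binary form Phi_n(X,Y) = Y^{phi(n)} phi_n(X/Y), evaluated at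
   integers x, y: the homogenization sum_i c_i x^i y^(phi(n) - i), where
   'Phi_n = sum_i c_i X^i (size 'Phi_n = totient n + 1). *)
Definition cycloBinForm (n : nat) (x y : int) : int :=
  \sum_(i < size 'Phi_n) ('Phi_n)`_i * x ^+ i * y ^+ (totient n - i).

From HB Require Import structures.
From mathcomp Require Import all_boot all_order all_algebra all_field.
From mathcomp Require Import zify ring.
Import Order.TTheory GRing.Theory Num.Theory.
Local Open Scope ring_scope.

Set Implicit Arguments.
Unset Strict Implicit.
Unset Printing Implicit Defensive.

(* Pairing each primitive n-th root of unity with its conjugate writes
   Phi_n(x, y) as a product over phi(n)/2 indices k of
   (x - z^k y)(x - z^-k y) = (x - y)^2 + x y |1 - z^k|^2.
   When x y >= 0, superadditivity of the geometric mean (from AM-GM) and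
   prod |1 - z^k|^2 = Phi_n(1) >= 1 give Phi_n(x, y) >= (x^2 - x y + y^2)^(phi(n)/2);
   when x y < 0 the same argument with -z^k gives the bound with x^2 + x y + y^2.
   Both quadratic forms are at least 7 as soon as max(|x|, |y|) >= 3. *)

Section GeometricMean.
Variables (F : numFieldType) (I : finType) (A : {pred I}).

Lemma ratio_lt_mean (f d : I -> F) (a c : F) :
  (0 < #|A|)%N -> {in A, forall i, 0 <= f i} -> {in A, forall i, 0 < d i} ->
  0 < a -> 0 < c -> a ^+ #|A| <= \prod_(i in A) f i ->
  \prod_(i in A) d i < c ^+ #|A| ->
  a / c < (\sum_(i in A) f i / d i) / #|A|%:R.
Proof.
move=> N_gt0 f_ge0 d_gt0 a_gt0 c_gt0 le_a lt_c.
have fd_ge0 : {in A, forall i, 0 <= f i / d i}.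
  by move=> i Ai; rewrite divr_ge0 ?f_ge0 ?ltW ?d_gt0.
have mean_ge0 : 0 <= (\sum_(i in A) f i / d i) / #|A|%:R.
  by rewrite divr_ge0 ?sumr_ge0.
rewrite -(ltr_pXn2r N_gt0) ?nnegrE ?mean_ge0 ?divr_ge0 ?ltW //.
apply: lt_le_trans (leif_AGM fd_ge0).1.
have d_prod_gt0 : 0 < \prod_(i in A) d i by apply: prodr_gt0.
rewrite big_split /= prodfV expr_div_n.
apply: lt_le_trans (_ : a ^+ #|A| / \prod_(i in A) d i <= _).
  by rewrite ltr_pM2l ?exprn_gt0 // ltf_pV2 ?posrE ?exprn_gt0.
by rewrite ler_wpM2r // invr_ge0 ltW.
Qed.

Lemma geomean_superadditive (f g : I -> F) (a b : F) :
  0 <= a -> 0 <= b -> {in A, forall i, 0 <= f i} -> {in A, forall i, 0 <= g i} ->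
  a ^+ #|A| <= \prod_(i in A) f i -> b ^+ #|A| <= \prod_(i in A) g i ->
  (a + b) ^+ #|A| <= \prod_(i in A) (f i + g i).
Proof.
move=> + + f_ge0 g_ge0 le_a le_b; rewrite !le0r.
move=> /predU1P[-> _|a_gt0].
  rewrite add0r (le_trans le_b) // ler_prod // => i Ai.
  by rewrite g_ge0 // lerDr f_ge0.
move=> /predU1P[->|b_gt0].
  rewrite addr0 (le_trans le_a) // ler_prod // => i Ai.
  by rewrite f_ge0 // lerDl g_ge0.
have [N0|N_gt0] := posnP #|A|.
  by rewrite N0 expr0 (big_pred0 _ _ _ _ (card0_eq N0)).
have fg_gt0 : {in A, forall i, 0 < f i + g i}.
  move=> i Ai; rewrite lt0r addr_ge0 ?f_ge0 ?g_ge0 // andbT.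
  apply: contraTneq le_a => /eqP; rewrite paddr_eq0 ?f_ge0 ?g_ge0 // => /andP[/eqP fi0 _].
  by rewrite (bigD1 i) //= fi0 mul0r lt_geF ?exprn_gt0.
have ab_gt0 : 0 < a + b by rewrite addr_gt0.
rewrite real_leNgt ?ger0_real ?exprn_ge0 ?prodr_ge0 ?ltW //; last first.
  by move=> i Ai; rewrite ltW ?fg_gt0.
apply/negP => lt_prod.
(* Otherwise the two AM-GM bounds would add up to more than 1. *)
have := ltrD (ratio_lt_mean N_gt0 f_ge0 fg_gt0 a_gt0 ab_gt0 le_a lt_prod)
             (ratio_lt_mean N_gt0 g_ge0 fg_gt0 b_gt0 ab_gt0 le_b lt_prod).
rewrite -!mulrDl -big_split /= (eq_bigr (fun=> 1)) ?sumr_const; last first.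
  by move=> i Ai; rewrite -mulrDl divff // gt_eqF ?fg_gt0.
by rewrite !divff ?ltxx // ?pnatr_eq0 -?lt0n // gt_eqF.
Qed.

End GeometricMean.

Lemma coprimeBl n k : (k <= n)%N -> coprime (n - k) n = coprime k n.
Proof.
by move=> le_kn; rewrite /coprime -{2 3}(subnK le_kn) gcdnDl gcdnDr gcdnC.
Qed.

Definition half_coprime n := [pred k : 'I_n | coprime k n && (k.*2 < n)%N].

Lemma big_coprime_pair (R : Type) (idx : R) (op : Monoid.com_law idx) n
    (F : nat -> R) : (2 < n)%N ->
  \big[op/idx]_(k < n | coprime k n) F k =
  \big[op/idx]_(k in half_coprime n) op (F k) (F (n - k)%N).
Proof.
move=> n_gt2; rewrite big_split /= (bigID (fun k : 'I_n => (k.*2 < n)%N)) /=.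
congr (op _ _).
have coprime0n : coprime 0 n = false.
  by rewrite /coprime gcd0n; case: n n_gt2 => // [[]].
rewrite [RHS](eq_bigl (fun k : 'I_n => coprime k n && (k.*2 < n)%N)) //.
rewrite -(big_mkord (fun k => coprime k n && ~~ (k.*2 < n)%N)).
rewrite -(big_mkord (fun k => coprime k n && (k.*2 < n)%N) (fun k => F (n - k)%N)).
have n_gt0 : (0 < n)%N by lia.
rewrite big_ltn_cond // coprime0n [RHS]big_ltn_cond // coprime0n /=.
rewrite big_nat_rev [LHS]big_nat_cond [RHS]big_nat_cond.
apply: eq_big => [k|k /andP[/andP[_ lt_kn] _]]; last by rewrite add1n subSS.
rewrite add1n subSS; apply: andb_id2l => /andP[k_gt0 lt_kn].
rewrite coprimeBl; last exact: ltnW.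
apply: andb_id2l => cop_kn.
have ne_k2n : k.*2 != n.
  apply: contraTneq cop_kn => k2n; move: n_gt2.
  by rewrite /coprime -k2n -muln2 gcdnMr; lia.
by apply/idP/idP; move: ne_k2n k_gt0 lt_kn; rewrite -!muln2; lia.
Qed.

Lemma totient_half_coprime n : (2 < n)%N -> totient n = (#|half_coprime n|).*2.
Proof.
move=> n_gt2; rewrite totient_count_coprime big_mkord.
transitivity (\sum_(k < n | coprime k n) 1)%N.
  by rewrite [RHS]big_mkcond; apply: eq_bigr => k _; rewrite coprime_sym; case: coprime.
by rewrite (big_coprime_pair _ (fun=> 1%N)) // sum_nat_const muln2.
Qed.

Definition binForm (R : nzRingType) (p : {poly R}) (x y : R) : R :=
  \sum_(i < size p) p`_i * x ^+ i * y ^+ ((size p).-1 - i).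

Lemma cycloBinFormE n x y : cycloBinForm n x y = binForm 'Phi_n x y.
Proof. by rewrite /cycloBinForm /binForm size_Cyclotomic. Qed.

Lemma rmorph_binForm (R S : nzRingType) (f : {rmorphism R -> S}) p x y :
  injective f -> f (binForm p x y) = binForm (map_poly f p) (f x) (f y).
Proof.
move=> f_inj; rewrite /binForm size_map_inj_poly ?rmorph0 // rmorph_sum.
by apply: eq_bigr => i _; rewrite coef_map !rmorphM !rmorphXn.
Qed.

Lemma binForm_prod_XsubC (F : fieldType) (I : Type) (r : seq I) (P : pred I)
    (c : I -> F) x y :
  binForm (\prod_(i <- r | P i) ('X - (c i)%:P)) x y =
  \prod_(i <- r | P i) (x - c i * y).
Proof.
rewrite -big_filter -[RHS]big_filter; move: (filter P r) => {P}r.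
set p : {poly F} := \prod_(i <- r) _.
have size_p : size p = (size r).+1 by apply: size_prod_XsubC.
have lead_p : p`_(size r) = 1.
  by rewrite -[size r]/((size r).+1.-1) -size_p -lead_coefE; apply/monicP/monic_prod_XsubC.
have horner_p t : p.[t] = \prod_(i <- r) (t - c i).
  by rewrite horner_prod; under eq_bigr do rewrite hornerXsubC.
have prod_const z : \prod_(i <- r) z = z ^+ size r.
  by rewrite (big_tnth _ _ r) prodr_const card_ord.
clearbody p; rewrite /binForm size_p /=.
have [->|y_neq0] := eqVneq y 0.
  rewrite big_ord_recr /= big1 => [|i _]; last first.
    by rewrite expr0n subn_eq0 leqNgt ltn_ord mulr0.
  under [RHS]eq_bigr do rewrite mulr0 subr0.
  by rewrite add0r subnn expr0 mulr1 lead_p mul1r prod_const.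
have -> : \prod_(i <- r) (x - c i * y) = y ^+ size r * p.[x / y].
  rewrite horner_p -prod_const -big_split /=.
  by apply: eq_bigr => i _; field.
rewrite horner_coef size_p mulr_sumr; apply: eq_bigr => i _.
have le_i_r : (i <= size r)%N by rewrite -ltnS.
rewrite expr_div_n (exprB le_i_r) ?unitfE //.
by field; rewrite expf_neq0.
Qed.

Lemma mul_conj_factors (C : numClosedFieldType) (w x y : C) : `|w| = 1 ->
  (x - w * y) * (x - w^* * y) = (x - y) ^+ 2 + x * y * `|1 - w| ^+ 2.
Proof.
move=> w_norm; have w_conj : w * w^* = 1 by rewrite -normCK w_norm expr1n.
rewrite normCK rmorphB /= conjC1; move: (w^*) w_conj => v wv.
have -> : (x - w * y) * (x - v * y) = x ^+ 2 - (w + v) * x * y + w * v * y ^+ 2.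
  by ring.
have -> : (1 - w) * (1 - v) = 1 - (w + v) + w * v by ring.
by rewrite wv; ring.
Qed.

Lemma prod_conj_factors_ge (I : finType) (A : {pred I}) (w : I -> algC) (x y : int) :
  0 <= x * y -> {in A, forall i, `|w i| = 1} ->
  1 <= \prod_(i in A) `|1 - w i| ^+ 2 ->
  ((x ^+ 2 - x * y + y ^+ 2)%:~R : algC) ^+ #|A| <=
  \prod_(i in A) ((x%:~R - w i * y%:~R) * (x%:~R - (w i)^* * y%:~R)).
Proof.
move=> xy_ge0 w_norm prod_ge1.
rewrite (eq_bigr (fun i => ((x - y) ^+ 2)%:~R + (x * y)%:~R * `|1 - w i| ^+ 2)); last first.
  by move=> i Ai; rewrite mul_conj_factors ?w_norm // expr2 !intrM intrB.
have -> : x ^+ 2 - x * y + y ^+ 2 = (x - y) ^+ 2 + x * y by ring.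
have a_ge0 : 0 <= ((x - y) ^+ 2)%:~R :> algC by rewrite ler0z sqr_ge0.
have b_ge0 : 0 <= (x * y)%:~R :> algC by rewrite ler0z.
rewrite rmorphD /=; apply: geomean_superadditive => //.
- by move=> i _; rewrite mulr_ge0 ?exprn_ge0.
- by rewrite prodr_const.
- by rewrite prodrMl ler_peMr ?exprn_ge0.
Qed.

Section CyclotomicFactors.
Variables (n : nat) (z : algC).
Hypotheses (n_gt2 : (2 < n)%N) (prim_z : n.-primitive_root z).

Lemma norm_prim_rootX k : `|z ^+ k| = 1.
Proof.
have n_gt0 : (0 < n)%N := prim_order_gt0 prim_z.
suff z_norm : `|z| = 1 by rewrite normrX z_norm expr1n.
apply: (pexpIrn n_gt0); rewrite ?nnegrE ?normr_ge0 ?ler01 //.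
by rewrite -normrX prim_expr_order // normr1 expr1n.
Qed.

Lemma conj_prim_rootX k : (k <= n)%N -> (z ^+ k)^* = z ^+ (n - k).
Proof.
move=> le_kn; rewrite -[LHS]mul1r -(prim_expr_order prim_z) -{1}(subnK le_kn).
by rewrite exprD -mulrA -normCK norm_prim_rootX expr1n mulr1.
Qed.

Lemma cycloBinForm_prod (x y : int) :
  (cycloBinForm n x y)%:~R = \prod_(k in half_coprime n)
    ((x%:~R - z ^+ k * y%:~R) * (x%:~R - (z ^+ k)^* * y%:~R)) :> algC.
Proof.
rewrite cycloBinFormE (rmorph_binForm _ _ _ intr_inj) (Cintr_Cyclotomic prim_z).
rewrite /cyclotomic binForm_prod_XsubC.
rewrite (big_coprime_pair _ (fun k => x%:~R - z ^+ k * y%:~R)) //.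
by apply: eq_bigr => k /andP[_ lt_2k_n]; rewrite conj_prim_rootX // ltnW.
Qed.

Lemma half_coprime_sqr_neq1 (k : 'I_n) : k \in half_coprime n -> (z ^+ k) ^+ 2 != 1.
Proof.
case/andP=> cop_kn lt_2k_n; rewrite -exprM muln2 -(expr0 z) (eq_prim_root_expr prim_z).
rewrite mod0n modn_small // double_eq0; apply: contraTneq cop_kn => ->.
by rewrite /coprime gcd0n gtn_eqF // ltnW.
Qed.

Lemma prod_norm_1_sub_ge1 (e : int) : e ^+ 2 = 1 ->
  1 <= \prod_(k in half_coprime n) `|1 - e%:~R * z ^+ k| ^+ 2.
Proof.
move=> e_sqr; have e_conj : (e%:~R : algC)^* = e%:~R by apply/conj_intr/intr_int.
set P := \prod_(k in _) _.
have P_gt0 : 0 < P.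
  apply: prodr_gt0 => k half_k; apply: exprn_gt0; rewrite normr_gt0 subr_eq0 eq_sym.
  apply: contra (half_coprime_sqr_neq1 half_k) => /eqP ez_eq1.
  by rewrite -(expr1n _ 2) -ez_eq1 exprMn -rmorphXn e_sqr rmorph1 mul1r.
have P_int : P = (cycloBinForm n 1 e)%:~R.
  rewrite cycloBinForm_prod; apply: eq_bigr => k _.
  by rewrite normCK rmorphB rmorphM /= conjC1 e_conj rmorph1 ![e%:~R * _]mulrC.
by move: P_gt0; rewrite P_int ltr0z ler1z; lia.
Qed.

(* [e = 1] or [e = -1] covers both signs of [x * y]: the factors of the product
   are unchanged when [(z ^+ k, y)] is replaced by [(e * z ^+ k, e * y)]. *)
Lemma cycloBinForm_ge (e x y : int) : e ^+ 2 = 1 -> 0 <= x * (e * y) ->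
  (x ^+ 2 - x * (e * y) + (e * y) ^+ 2) ^+ (totient n %/ 2) <= cycloBinForm n x y.
Proof.
move=> e_sqr sign_xey.
have e_norm : `|e%:~R : algC| = 1.
  by rewrite -intr_norm; move/eqP: e_sqr; rewrite sqr_norm_eq1 => /eqP->.
rewrite totient_half_coprime // -muln2 mulnK // -(ler_int algC) rmorphXn /=.
rewrite cycloBinForm_prod (eq_bigr (fun k : 'I_n =>
  (x%:~R - e%:~R * z ^+ k * (e * y)%:~R) * (x%:~R - (e%:~R * z ^+ k)^* * (e * y)%:~R))).
  apply: prod_conj_factors_ge sign_xey _ (prod_norm_1_sub_ge1 e_sqr) => k _.
  by rewrite normrM e_norm norm_prim_rootX mulr1.
move=> k _; have -> : (e%:~R * z ^+ k)^* = e%:~R * (z ^+ k)^* by rewrite rmorphM rmorph_int.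
have ee : (e%:~R * e%:~R : algC) = 1 by rewrite -intrM -expr2 e_sqr.
have ee_cancel w : e%:~R * w * (e%:~R * y%:~R) = w * y%:~R :> algC.
  by rewrite mulrACA ee mul1r.
by rewrite (intrM _ e y) !ee_cancel.
Qed.

End CyclotomicFactors.

Lemma seven_le_eisenstein_norm (x y : int) :
  3 <= Num.max `|x| `|y| -> 7 <= x ^+ 2 - x * y + y ^+ 2.
Proof.
have := sqr_ge0 (y + y - x); have := sqr_ge0 (x + x - y).
by rewrite le_max !expr2 => ? ? /orP[] ?; nia.
Qed.

Lemma seven_pow_le_cycloBinForm n (x y : int) : (2 < n)%N ->
  3 <= Num.max `|x| `|y| -> 7 ^+ (totient n %/ 2) <= cycloBinForm n x y.
Proof.
move=> n_gt2 max_ge3; have [z prim_z] := C_prim_root_exists (ltnW (ltnW n_gt2)).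
have [e e_sqr sign_xey] : exists2 e : int, e ^+ 2 = 1 & 0 <= x * (e * y).
  by have [xy_ge0|xy_lt0] := lerP 0 (x * y); [exists 1 | exists (-1)]; rewrite ?sqrrN1 //; nia.
apply: le_trans (cycloBinForm_ge n_gt2 prim_z e_sqr sign_xey).
have seven_le : 7 <= x ^+ 2 - x * (e * y) + (e * y) ^+ 2.
  apply: seven_le_eisenstein_norm; rewrite normrM.
  by move/eqP: e_sqr; rewrite sqr_norm_eq1 => /eqP->; rewrite mul1r.
by apply: lerXn2r; rewrite ?nnegrE ?(le_trans _ seven_le).
Qed.

Theorem mainTheorem3 (n : nat) (x y : int) :
  (3 <= n)%N ->
  2 <= Num.max `|x| `|y| ->
  cycloBinForm n x y < 7 ^+ (totient n %/ 2) ->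
  Num.max `|x| `|y| = 2.
Proof.
move=> n_ge3 max_ge2 lt_7pow; apply/eqP; rewrite eq_le max_ge2 andbT.
rewrite leNgt; apply: contraL lt_7pow => max_gt2.
by rewrite -leNgt seven_pow_le_cycloBinForm.
Qed.
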